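(* Fix $0<\epsilon<2$. (1) If $2\le p_1<p_2<\infty$, then $\delta(p_2,\epsilon)<\delta(p_1,\epsilon)$. (2) If $1<p_1<p_2\le 2$, then $\delta(p_1,\epsilon)<\delta(p_2,\epsilon)$.
   Context: For $1<p<\infty$ and $0<\epsilon\le2$: if $1<p\le2$, $\delta(p,\epsilon)$ is the unique $\delta\in[0,1]$ with $(1-\delta+\frac{\epsilon}{2})^p+|1-\delta-\frac{\epsilon}{2}|^p=2$; if $p\ge2$, $\delta(p,\epsilon)=1-\left(1-(\frac{\epsilon}{2})^p\right)^{1/p}$. *)

From HB Require Import structures.
From mathcomp Require Import all_boot all_order all_algebra.
From mathcomp Require Import all_classical all_reals all_analysis.
Set Implicit Arguments. Unset Strict Implicit. Unset Printing Implicit Defensive.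
Import Order.TTheory GRing.Theory Num.Theory.
Local Open Scope classical_set_scope.
Local Open Scope ring_scope.

Definition delta_eq (R : realType) (p eps d : R) : Prop :=
  0 <= d <= 1 /\ (1 - d + eps / 2) `^ p + `|1 - d - eps / 2| `^ p = 2.

Definition delta (R : realType) (p eps : R) : R :=
  if p <= 2 then xget 0 [set d | delta_eq p eps d]
  else 1 - (1 - (eps / 2) `^ p) `^ (p^-1).

From HB Require Import structures.
From mathcomp Require Import all_boot all_order all_algebra.
From mathcomp Require Import all_classical all_reals all_analysis.
From mathcomp Require Import lra.
Import Order.TTheory GRing.Theory Num.Theory numFieldNormedType.Exports.
Local Open Scope classical_set_scope.
Local Open Scope ring_scope.

(* For p >= 2 the claim is that (1 - a^p)^(1/p) increases with p when 0 < a < 1: with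
   r = q/p > 1 and b = a^p one has (1 - b)^r < 1 - b < 1 - b^r.  At p = 2 the defining
   equation of delta reduces to the same closed form.
   For 1 < p <= 2, t = 1 - delta(p, eps) solves |t + e|^p + |t - e|^p = 2 with e = eps/2.
   As t > 0, the two bases differ, so by the strict power-mean inequality the left side
   exceeds 2 once p is replaced by q > p; since it is also nondecreasing in t >= 0, the
   solution t for q is smaller than the one for p. *)

Section powR_facts.
Context {R : realType}.
Implicit Types p q r a b e u v x : R.

Lemma continuous_norm_powR p : 0 < p -> continuous (fun x : R => `|x| `^ p).
Proof.
move=> p0 x; have [->|x0] := eqVneq x 0.
  apply/cvgrPdist_le => /= e e0.
  have e1 : 0 < e `^ p^-1 by apply: powR_gt0.
  near=> t.
  rewrite normr0 powR0 ?gt_eqF// sub0r normrN ger0_norm ?powR_ge0//.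
  have tle : `|t| <= e `^ p^-1.
    near: t; exists (e `^ p^-1) => // y /=; by rewrite sub0r normrN => /ltW.
  have -> : e = (e `^ p^-1) `^ p by rewrite -powRrM mulVf ?gt_eqF// powRr1 // ltW.
  by apply: (ge0_ler_powR (ltW p0)) => //; rewrite ?nnegrE ?ltW.
have cpow : {for `|x|, continuous (@powR R ^~ p)}.
  apply: differentiable_continuous; apply/derivable1_diffP.
  have : 0 < `|x| by rewrite normr_gt0.
  by move=> /(is_derive1_powR p) D; exact: ex_derive.
exact: (continuous_comp (@norm_continuous _ R x) cpow).
Unshelve. all: by end_near. Qed.

Lemma tangent_powR_lt p a x : 1 < p -> 0 < a -> 0 <= x -> x != a ->
  a `^ p + p * a `^ (p - 1) * (x - a) < x `^ p.
Proof.
move=> p1 a0 x0 xa; have p0 : 0 < p by exact: lt_trans p1.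
(* [k] has derivative [p * y `^ (p - 1) - c], negative on ]0, a[ and positive on ]a, +oo[. *)
set c := p * a `^ (p - 1); pose k y := y `^ p - c * y.
suff : k a < k x by rewrite /k; lra.
have dk (y : R) : 0 < y -> is_derive y 1 k (p * y `^ (p - 1) - c).
  move=> y0; have -> : k = (@powR R ^~ p) - c *: id by apply/funext.
  apply: is_deriveB; first exact: is_derive1_powR.
  by rewrite -[X in is_derive _ _ _ X]mulr1; exact: is_deriveZ.
have k_derivable (y : R) : 0 < y -> derivable k y 1.
  by move=> y0; have D := dk y y0; exact: ex_derive.
have k'E (y : R) : 0 < y -> derive1 k y = p * y `^ (p - 1) - c.
  by move=> y0; have D := dk y y0; rewrite derive1E; exact: derive_val.
have ltr_k'_term (y z : R) : 0 <= y -> y < z -> p * y `^ (p - 1) < p * z `^ (p - 1).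
  move=> y0 yz; rewrite ltr_pM2l // gt0_ltr_powR ?subr_gt0 //.
  by rewrite nnegrE ltW // (le_lt_trans y0).
have [xa'|ax|ax] := ltgtP x a; last by rewrite ax eqxx in xa.
- have [->|x0'] := eqVneq x 0.
    rewrite /k powR0 ?gt_eqF // mulr0 subr0 /c -mulrA [_ `^ _ * a]mulrC.
    rewrite mulr_powRB1 ?ltW //.
    by have := powR_gt0 p a0; nra.
  have {}x0 : 0 < x by rewrite lt_neqAle eq_sym x0' x0.
  apply: (@ltr0_derive1_lt_cc _ k x a) => //; last 2 first.
  + by rewrite in_itv /= lexx ltW.
  + by rewrite in_itv /= lexx ltW.
  + by move=> z; rewrite in_itv /= => /andP[xz _]; apply: k_derivable (lt_trans x0 xz).
  + move=> z; rewrite in_itv /= => /andP[xz za].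
    by rewrite k'E ?(lt_trans x0 xz) // subr_lt0 ltr_k'_term // ltW // (lt_trans x0 xz).
  + apply: derivable_within_continuous => z; rewrite in_itv /= => /andP[xz _].
    exact: k_derivable (lt_le_trans x0 xz).
- apply: (@gtr0_derive1_lt_cc _ k a x) => //; last 2 first.
  + by rewrite in_itv /= lexx ltW.
  + by rewrite in_itv /= lexx ltW.
  + by move=> z; rewrite in_itv /= => /andP[az _]; apply: k_derivable (lt_trans a0 az).
  + move=> z; rewrite in_itv /= => /andP[az _].
    by rewrite k'E ?(lt_trans a0 az) // subr_gt0 ltr_k'_term // ltW.
  + apply: derivable_within_continuous => z; rewrite in_itv /= => /andP[az _].
    exact: k_derivable (lt_le_trans a0 az).
Qed.

Lemma tangent_powR_le p a x : 1 < p -> 0 < a -> 0 <= x ->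
  a `^ p + p * a `^ (p - 1) * (x - a) <= x `^ p.
Proof.
move=> p1 a0 x0; have [->|xa] := eqVneq x a; first by rewrite subrr mulr0 addr0.
exact/ltW/tangent_powR_lt.
Qed.

Lemma gt1r_powR a r : 0 < a < 1 -> 1 < r -> a `^ r < a.
Proof.
move=> /andP[a0 a1] r1; have lna : ln a < 0 by rewrite ln_lt0 // a0.
by rewrite /powR gt_eqF // -{2}(lnK (x:=a)) ?posrE // ltr_expR; nra.
Qed.

Lemma powR_sum2_gt {r a b} : 1 < r -> 0 <= a -> 0 <= b -> a != b -> a + b = 2 ->
  2 < a `^ r + b `^ r.
Proof.
move=> r1 a0 b0 ab sab.
have a1 : a != 1 by apply: contraNneq ab => a1; apply/eqP; lra.
have b1 : b != 1 by apply: contraNneq ab => b1; apply/eqP; lra.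
have := tangent_powR_lt r 1 a r1 ltr01 a0 a1.
have := tangent_powR_lt r 1 b r1 ltr01 b0 b1.
rewrite !powR1 /=; nra.
Qed.

Lemma power_mean2_gt {p q u v} : 0 < p -> p < q -> 0 <= u -> 0 <= v -> u != v ->
  u `^ p + v `^ p = 2 -> 2 < u `^ q + v `^ q.
Proof.
move=> p0 pq u0 v0 uv s2.
have r1 : 1 < q / p by rewrite ltr_pdivlMr // mul1r.
have qE w : w `^ q = (w `^ p) `^ (q / p).
  by rewrite -powRrM mulrC divfK // gt_eqF.
rewrite !qE; apply: powR_sum2_gt; rewrite ?powR_ge0 //.
by apply: contra uv => /eqP/(powR_injective p0); rewrite !nnegrE => /(_ u0 v0) ->.
Qed.

Lemma root_onem_powR_lt e p q : 0 < e < 1 -> 0 < p -> p < q ->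
  (1 - e `^ p) `^ p^-1 < (1 - e `^ q) `^ q^-1.
Proof.
move=> /andP[e0 e1] p0 pq; have q0 : 0 < q := lt_trans p0 pq.
set a := e `^ p; set r := q / p.
have a0 : 0 < a by apply: powR_gt0.
have a1 : a < 1 by have := gt0_ltr_powR p0 (ltW e0) ler01 e1; rewrite powR1.
have r1 : 1 < r by rewrite /r ltr_pdivlMr // mul1r.
have r0 : 0 < r by apply: lt_trans r1.
have -> : e `^ q = a `^ r by rewrite /a -powRrM /r mulrC divfK // gt_eqF.
have -> : q^-1 = r^-1 * p^-1 by rewrite /r invf_div mulrAC divff ?mul1r // gt_eqF.
rewrite powRrM gt0_ltr_powR ?invr_gt0 ?nnegrE ?subr_ge0 ?powR_ge0 ?ltW //.
have ar : a `^ r < a by rewrite gt1r_powR // a0.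
have onem_ar : (1 - a) `^ r < 1 - a by rewrite gt1r_powR //; lra.
have -> : 1 - a = ((1 - a) `^ r) `^ r^-1.
  by rewrite -powRrM mulfV ?gt_eqF // powRr1 // subr_ge0 ltW.
rewrite gt0_ltr_powR ?invr_gt0 ?nnegrE ?powR_ge0 //; last lra.
by rewrite subr_ge0 ltW // (lt_trans ar).
Qed.

End powR_facts.

Section delta_facts.
Context {R : realType}.
Implicit Types p q e t eps d : R.

Definition pm_powR_sum p e t := `|t + e| `^ p + `|t - e| `^ p.

Lemma continuous_pm_powR_sum p e : 0 < p -> continuous (pm_powR_sum p e).
Proof.
move=> p0 t.
have norm_powR_shift c : {for t, continuous (fun s => `|s + c| `^ p)}.
  have shift : {for t, continuous (+%R^~ c)}.
    by apply: cvgD; [exact: cvg_id | exact: cvg_cst].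
  exact: (continuous_comp shift (@continuous_norm_powR R p p0 _)).
exact: (cvgD (norm_powR_shift e) (norm_powR_shift (- e))).
Qed.

Lemma ge0_ler_pm_powR_sum p e t1 t2 : 1 < p -> 0 <= e -> 0 <= t1 -> t1 <= t2 ->
  pm_powR_sum p e t1 <= pm_powR_sum p e t2.
Proof.
move=> p1 e0; have p0 : 0 < p by exact: lt_trans p1.
have above_e s1 s2 : e <= s1 -> s1 <= s2 -> pm_powR_sum p e s1 <= pm_powR_sum p e s2.
  move=> es1 s12; rewrite /pm_powR_sum.
  have [-> ->] : `|s1 + e| = s1 + e /\ `|s2 + e| = s2 + e by split; rewrite ger0_norm //; lra.
  have [-> ->] : `|s1 - e| = s1 - e /\ `|s2 - e| = s2 - e by split; rewrite ger0_norm //; lra.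
  by apply: lerD; apply: (ge0_ler_powR (ltW p0)); rewrite ?nnegrE; lra.
have below_e s1 s2 : 0 <= s1 -> s1 < s2 -> s2 <= e ->
    pm_powR_sum p e s1 <= pm_powR_sum p e s2.
  move=> s10 s12 s2e; rewrite /pm_powR_sum.
  have [-> ->] : `|s1 + e| = s1 + e /\ `|s2 + e| = s2 + e by split; rewrite ger0_norm //; lra.
  have [-> ->] : `|s1 - e| = e - s1 /\ `|s2 - e| = e - s2.
    by split; rewrite ler0_norm ?opprB //; lra.
  have slope_gap : 0 <= p * (s2 - s1) * ((s1 + e) `^ (p - 1) - (e - s1) `^ (p - 1)).
    rewrite !mulr_ge0 ?subr_ge0 ?(ltW p0) ?(ltW s12) //.
    by apply: ge0_ler_powR; rewrite ?nnegrE; lra.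
  have := tangent_powR_le p (e - s1) (e - s2) p1 ltac:(lra) ltac:(lra).
  have := tangent_powR_le p (s1 + e) (s2 + e) p1 ltac:(lra) ltac:(lra).
  lra.
move=> t10 t12; have [t2e|et2] := leP t2 e.
  have [->|t12'] := eqVneq t1 t2; first exact: lexx.
  by apply: below_e; rewrite ?lt_neqAle ?t12'.
have [et1|t1e] := leP e t1; first exact: above_e.
apply: (le_trans (below_e t1 e t10 t1e (lexx e))).
exact: above_e (lexx e) (ltW et2).
Qed.

Lemma pm_powR_sum_gt2 {p q e t} : 0 < p -> p < q -> 0 < e -> 0 < t ->
  pm_powR_sum p e t = 2 -> 2 < pm_powR_sum q e t.
Proof.
move=> p0 pq e0 t0; apply: power_mean2_gt => //.
by rewrite gtr0_norm ?addr_gt0 // gt_eqF // ltr_norml; lra.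
Qed.

Lemma pm_powR_sum0_lt p e : 0 < p -> 0 < e < 1 -> pm_powR_sum p e 0 < 2.
Proof.
move=> p0 /andP[e0 e1]; rewrite /pm_powR_sum add0r sub0r normrN gtr0_norm //.
by have := gt0_ltr_powR p0 (ltW e0) ler01 e1; rewrite powR1 /=; lra.
Qed.

Lemma pm_powR_sum1_ge p e : 1 < p -> 0 <= e <= 1 -> 2 <= pm_powR_sum p e 1.
Proof.
move=> p1 /andP[e0 e1]; rewrite /pm_powR_sum !ger0_norm; try lra.
have := tangent_powR_le p 1 (1 + e) p1 ltr01 ltac:(lra).
have := tangent_powR_le p 1 (1 - e) p1 ltr01 ltac:(lra).
by rewrite !powR1 /=; lra.
Qed.

Lemma delta_eqE {p eps d} : 0 <= eps -> delta_eq p eps d <->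
  0 <= d <= 1 /\ pm_powR_sum p (eps / 2) (1 - d) = 2.
Proof.
move=> eps0; rewrite /delta_eq /pm_powR_sum.
have nE : 0 <= d <= 1 -> `|1 - d + eps / 2| = 1 - d + eps / 2.
  by case/andP=> _ d1; rewrite ger0_norm //; lra.
by split=> -[d01 h]; split=> //; [rewrite nE | rewrite -nE].
Qed.

Lemma delta_eq_exists {p eps} : 1 < p -> 0 < eps < 2 -> exists d, delta_eq p eps d.
Proof.
move=> p1 /andP[eps0 eps2]; have p0 : 0 < p by exact: lt_trans p1.
have e01 : 0 < eps / 2 < 1 by apply/andP; split; lra.
have [t] : exists2 t, t \in `[0, 1] & pm_powR_sum p (eps / 2) t = 2.
  apply: IVT => //; first exact/continuous_subspaceT/continuous_pm_powR_sum.
  rewrite ge_min le_max ltW ?pm_powR_sum0_lt //= pm_powR_sum1_ge ?orbT //.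
  by case/andP: e01 => e0 e1; rewrite ltW ?ltW.
rewrite in_itv /= => /andP[t0 t1] ft.
exists (1 - t); apply/delta_eqE; first exact: ltW.
have -> : 1 - (1 - t) = t by lra.
by split => //; apply/andP; split; lra.
Qed.

Lemma delta_eq_delta {p eps} : 1 < p <= 2 -> 0 < eps < 2 -> delta_eq p eps (delta p eps).
Proof.
move=> /andP[p1 p2] heps; rewrite /delta p2.
exact: (xgetPex 0 (delta_eq_exists p1 heps) : [set d | delta_eq p eps d] _).
Qed.

Lemma delta_eq_lt {p1 p2 eps d1 d2} : 0 < p1 -> p1 < p2 -> 1 < p2 -> 0 < eps < 2 ->
  delta_eq p1 eps d1 -> delta_eq p2 eps d2 -> d1 < d2.
Proof.
move=> p10 p12 p21 /andP[eps0 eps2].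
move=> /(delta_eqE (ltW eps0)) [/andP[d10 d11] f1].
move=> /(delta_eqE (ltW eps0)) [/andP[d20 d21] f2].
have e0 : 0 < eps / 2 by lra.
have t1_gt0 : 0 < 1 - d1.
  rewrite lt_neqAle subr_ge0 d11 andbT; apply/eqP => t1_eq0; move: f1.
  by rewrite -t1_eq0 => /eqP; rewrite lt_eqF // pm_powR_sum0_lt //; apply/andP; split; lra.
rewrite ltNge; apply/negP => d21'.
have := pm_powR_sum_gt2 p10 p12 e0 t1_gt0 f1.
have := ge0_ler_pm_powR_sum p2 (eps / 2) (1 - d1) (1 - d2) p21 (ltW e0) (ltW t1_gt0).
by rewrite f2; lra.
Qed.

Lemma delta_ge2E p eps : 2 <= p -> 0 < eps < 2 ->
  delta p eps = 1 - (1 - (eps / 2) `^ p) `^ p^-1.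
Proof.
move=> p2 heps; have /andP[eps0 _] := heps.
have [<-|p2'] := eqVneq 2 p; last by rewrite /delta leNgt lt_neqAle p2' p2.
have := @delta_eq_delta 2 eps ltac:(rewrite lexx; lra) heps.
set d := delta 2 eps; case/(delta_eqE (ltW eps0)) => /andP[d0 d1].
set e := eps / 2; have e0 : 0 <= e by rewrite /e; lra.
have sqrE (x : R) : 0 <= x -> x `^ 2 = x ^+ 2 by move=> x0; rewrite -powR_mulrn.
rewrite /pm_powR_sum !sqrE ?normr_ge0 // !real_normK ?num_real // => h.
have -> : 1 - e ^+ 2 = (1 - d) ^+ 2 by nra.
by rewrite powR12_sqrt ?sqr_ge0 // sqrtr_sqr ger0_norm; lra.
Qed.

End delta_facts.

Theorem proposition3p15 (R : realType) (eps : R) :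
  0 < eps < 2 ->
  (forall p1 p2 : R, 2 <= p1 -> p1 < p2 -> delta p2 eps < delta p1 eps) /\
  (forall p1 p2 : R, 1 < p1 -> p1 < p2 -> p2 <= 2 -> delta p1 eps < delta p2 eps).
Proof.
move=> heps; have /andP[eps0 eps2] := heps.
split=> [p1 p2 p1_ge2 p12 | p1 p2 p1_gt1 p12 p2_le2].
- rewrite !delta_ge2E ?(le_trans p1_ge2 (ltW p12)) // ltrD2l ltrN2.
  by apply: root_onem_powR_lt => //; [apply/andP; split | apply: lt_le_trans p1_ge2]; lra.
- have p2_gt1 : 1 < p2 by exact: lt_trans p12.
  apply: (delta_eq_lt _ p12 p2_gt1 heps); first exact: lt_trans p1_gt1.
  + by apply: delta_eq_delta heps; rewrite p1_gt1 (le_trans (ltW p12)).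
  + by apply: delta_eq_delta heps; rewrite p2_gt1.
Qed.
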